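(* Let $0<p<1$ and let $(\mathcal M,d,0)$ be a pointed $p$-metric space with $|\mathcal M|\ge3$. The following are equivalent: (a) for every $a\in[0,\infty)^{\mathcal M}$ with $\sum_{x\in\mathcal M}(a_xd(x,0))^p<\infty$ we have $\|\sum_{x\in\mathcal M}a_x\delta(x)\|_{\mathcal F_p(\mathcal M)}^p=\sum_{x\in\mathcal M}(a_xd(x,0))^p$; (b) for every $\alpha\ge0$ and every two distinct $x,y\in\mathcal M\setminus\{0\}$ we have $\|\delta(x)+\alpha\delta(y)\|_{\mathcal F_p(\mathcal M)}^p=d^p(x,0)+\alpha^pd^p(y,0)$; (c) for every $x\in\mathcal M\setminus\{0\}$ we have $d(x,0)=d(x,\mathcal M\setminus\{x\})$.
   Context: A $p$-metric space is a set with $d$ such that $d^p$ is a metric; pointed means a distinguished point $0$. A $p$-Banach space is a complete vector space with a $p$-norm (norm axioms with $\|x+y\|^p\le\|x\|^p+\|y\|^p$). $\delta(x)$ is the evaluation functional at $x$ on real functions on $\mathcal M$ vanishing at $0$ (so $\delta(0)=0$); $\mathcal F_p(\mathcal M)$ is the completion of $\mathrm{span}\{\delta(x)\}$ under $\|\sum a_i\delta(x_i)\|=\sup\|\sum a_if(x_i)\|_Y$ over all $p$-Banach $Y$ and $1$-Lipschitz $f:\mathcal M\to Y$ with $f(0)=0$. In (a), the possibly infinite sum $\sum_x a_x\delta(x)$ is the limit in $\mathcal F_p(\mathcal M)$ of finite partial sums (net indexed by finite subsets of $\mathcal M$). *)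

From HB Require Import structures.
From mathcomp Require Import all_boot all_order all_algebra finmap.
From mathcomp Require Import all_classical all_reals all_analysis.
Set Implicit Arguments. Unset Strict Implicit. Unset Printing Implicit Defensive.
Import Order.TTheory GRing.Theory Num.Theory.
Local Open Scope classical_set_scope.
Local Open Scope ring_scope.

Definition is_pmetric (R : realType) (p : R) (M : Type) (d : M -> M -> R) :=
  [/\ forall x y, 0 <= d x y,
      forall x y, d x y = 0 <-> x = y,
      forall x y, d x y = d y x &
      forall x y z, d x z `^ p <= d x y `^ p + d y z `^ p].

Record pBanach (R : realType) (q : R) := PBanach {
  pb_type : lmodType R;
  pb_norm : pb_type -> R;
  pb_norm_ge0 : forall x, 0 <= pb_norm x;
  pb_norm_eq0 : forall x, pb_norm x = 0 -> x = 0;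
  pb_normZ : forall (a : R) x, pb_norm (a *: x) = `|a| * pb_norm x;
  pb_normD : forall x y, pb_norm (x + y) `^ q <= pb_norm x `^ q + pb_norm y `^ q;
  pb_complete : forall u : nat -> pb_type,
    (forall e, 0 < e -> exists N, forall n m, (N <= n)%N -> (N <= m)%N ->
        pb_norm (u n - u m) < e) ->
    exists l, forall e, 0 < e -> exists N, forall n, (N <= n)%N -> pb_norm (u n - l) < e
}.
Arguments pb_norm {R q} _ _.

(* The norm in F_p(M) of the finite combination  sum_{(c,x) in s} c delta(x):
   supremum of ||sum c f(x)||_Y over all p-Banach Y and all 1-Lipschitz
   f : M -> Y with f(0) = 0. *)
Definition Fp_norm (R : realType) (p : R) (M : Type) (d : M -> M -> R) (o : M)
    (s : seq (R * M)) : R :=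
  sup [set r | exists (Y : @pBanach R p) (f : M -> pb_type Y),
         [/\ f o = 0,
             forall x y, pb_norm Y (f x - f y) <= d x y &
             r = pb_norm Y (\sum_(c <- s) c.1 *: f c.2)]].

Definition finset_net_cvg (R : realType) (M : Type) (g : set M -> R) (l : R) :=
  forall e, 0 < e -> exists A : set M, finite_set A /\
    forall B : set M, finite_set B -> A `<=` B -> `|g B - l| < e.

Definition dist_set (R : realType) (M : Type) (d : M -> M -> R) (x : M) (A : set M) : R :=
  inf [set d x z | z in A].

From HB Require Import structures.
From mathcomp Require Import all_boot all_order all_algebra finmap.
From mathcomp Require Import all_classical all_reals all_analysis.
From mathcomp Require Import lra.
Set Implicit Arguments. Unset Strict Implicit. Unset Printing Implicit Defensive.
Import Order.TTheory GRing.Theory Num.Theory numFieldNormedType.Exports.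
Local Open Scope classical_set_scope.
Local Open Scope ring_scope.

(* In every p-Banach space the p-triangle inequality gives
   ||sum a_x delta(x)||^p <= sum (a_x d(x,0))^p.  When 0 is a nearest point of
   every x <> 0, equality holds for a_x >= 0: the map sending x to the unit
   vector e_x of R^(supp a), normed by max(||w^+||_p, ||w^-||_p) with weights
   d(x,0), is 1-Lipschitz and attains the bound.  Summing over finite sets
   gives (a), which specializes to (b).  Conversely, if d(x,z) < d(x,0), then
   writing delta(x) + alpha delta(z) = (1+alpha) delta(z) + (delta(x) - delta(z))
   bounds the left side of (b) by (1+alpha)^p d(z,0)^p + d(x,z)^p, and since
   (1+alpha)^p - alpha^p -> 0 as alpha -> oo (p < 1), this contradicts (b). *)

Lemma ler_powR2r (R : realType) (r x y : R) :
  0 <= r -> 0 <= x -> x <= y -> x `^ r <= y `^ r.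
Proof. by move=> r0 x0 xy; apply: ge0_ler_powR; rewrite ?nnegrE ?(le_trans x0 xy). Qed.

Section PowR.
Variables (R : realType) (p : R).
Hypothesis p_gt0 : 0 < p.

Lemma powRpV x : 0 <= x -> (x `^ p) `^ p^-1 = x.
Proof. by move=> x0; rewrite -powRrM mulfV ?gt_eqF // powRr1. Qed.

Lemma powRVp x : 0 <= x -> (x `^ p^-1) `^ p = x.
Proof. by move=> x0; rewrite -powRrM mulVf ?gt_eqF // powRr1. Qed.

Lemma ler_powRV x y : 0 <= x -> 0 <= y -> x `^ p <= y -> x <= y `^ p^-1.
Proof.
move=> x0 y0 xy; rewrite -(powRpV x0).
by apply: ge0_ler_powR; rewrite ?nnegrE ?powR_ge0 ?invr_ge0 ?(ltW p_gt0).
Qed.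

Hypothesis p_le1 : p <= 1.

Lemma powRD_le s t : 0 <= s -> 0 <= t -> (s + t) `^ p <= s `^ p + t `^ p.
Proof.
move=> s0 t0; have [st0|st_neq0] := eqVneq (s + t) 0.
  by rewrite st0 powR0 ?gt_eqF // addr_ge0 // powR_ge0.
have st_gt0 : 0 < s + t by rewrite lt_neqAle eq_sym st_neq0 addr_ge0.
have scale a : 0 <= a <= s + t -> (s + t) `^ p * (a / (s + t)) <= a `^ p.
  case/andP=> a0 a_le; have [->|a_neq0] := eqVneq a 0; first by rewrite mul0r mulr0 powR_ge0.
  have -> : a `^ p = (s + t) `^ p * (a / (s + t)) `^ p.
    by rewrite -powRM ?divr_ge0 ?(ltW st_gt0) // mulrC divfK.
  rewrite ler_wpM2l ?powR_ge0 //; apply: ger1_powR => //.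
  have a_gt0 : 0 < a by rewrite lt_neqAle eq_sym a_neq0.
  by rewrite divr_gt0 //= ler_pdivrMr // mul1r.
apply: le_trans (lerD (scale s _) (scale t _)); rewrite ?s0 ?t0 ?lerDl ?lerDr //.
by rewrite -mulrDr -mulrDl divff // mulr1.
Qed.

Lemma powR1D_sub_le a : 0 < a -> (1 + a) `^ p - a `^ p <= a `^ (p - 1).
Proof.
move=> a_gt0; have a0 := ltW a_gt0.
have -> : 1 + a = a * (1 + a^-1) by rewrite mulrDr mulr1 mulfV ?gt_eqF // addrC.
rewrite powRM ?addr_ge0 ?invr_ge0 // powRD ?(lt0r_neq0 a_gt0) ?implybT //.
rewrite powR_inv1 // lerBlDl -{2}(mulr1 (a `^ p)) -mulrDr ler_wpM2l ?powR_ge0 //.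
by apply: ler1_powR => //; rewrite lerDl invr_ge0.
Qed.

End PowR.

Lemma cauchy_seq_cvg (R : realType) (u : nat -> R) :
  (forall e, 0 < e -> exists N, forall n m, (N <= n)%N -> (N <= m)%N -> `|u n - u m| < e) ->
  cvg (u @ \oo).
Proof.
move=> u_cauchy; apply/cauchy_cvgP/cauchy_exP => e e_gt0.
have [N uN] := u_cauchy e e_gt0; exists (u N), N => // n /= Nn.
exact: uN.
Qed.

Section PosPartLp.
Variables (R : realType) (p : R) (I : finType) (D : I -> R).
Hypotheses (p_gt0 : 0 < p) (p_le1 : p <= 1) (D_gt0 : forall i, 0 < D i).
Implicit Types (u v w : {ffun I -> R}).

(* A weighted l_p quasi-norm measuring positive and negative parts separately:
   unit vectors satisfy ||e_x - e_y|| = max (D x) (D y) rather than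
   (D x ^ p + D y ^ p) ^ (1/p), which is what lets x |-> e_x be 1-Lipschitz. *)
Definition lp_pos w := \sum_i (D i * Num.max (w i) 0) `^ p.
Definition lp_max w := Num.max (lp_pos w) (lp_pos (- w)).
Definition lp_norm w := lp_max w `^ p^-1.

Let D_ge0 i : 0 <= D i. Proof. exact: ltW. Qed.
Let max0_ge0 (x : R) : 0 <= Num.max x 0. Proof. by rewrite le_max lexx orbT. Qed.

Lemma lp_pos_ge0 w : 0 <= lp_pos w.
Proof. by apply: sumr_ge0 => i _; apply: powR_ge0. Qed.

Lemma lp_max_ge0 w : 0 <= lp_max w.
Proof. by rewrite le_max lp_pos_ge0. Qed.

Lemma lp_pos_term w i : (D i * Num.max (w i) 0) `^ p <= lp_pos w.
Proof.
by rewrite /lp_pos (bigD1 i) //= lerDl; apply: sumr_ge0 => j _; apply: powR_ge0.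
Qed.

Lemma lp_posD u v : lp_pos (u + v) <= lp_pos u + lp_pos v.
Proof.
rewrite /lp_pos -big_split /=; apply: ler_sum => i _.
apply: le_trans (powRD_le p_gt0 p_le1 _ _); rewrite ?mulr_ge0 //.
apply: ler_powR2r; rewrite ?(ltW p_gt0) ?mulr_ge0 // -mulrDr ler_wpM2l // ffunE.
by rewrite ge_max addr_ge0 // andbT; apply: lerD; rewrite le_max lexx.
Qed.

Lemma lp_posZ a w : 0 <= a -> lp_pos (a *: w) = a `^ p * lp_pos w.
Proof.
move=> a0; rewrite /lp_pos mulr_sumr; apply: eq_bigr => i _.
rewrite ffunE -powRM ?mulr_ge0 //; congr (_ `^ _).
by rewrite -[X in Num.max _ X](mulr0 a) -maxr_pMr // mulrCA.
Qed.

Lemma lp_maxD u v : lp_max (u + v) <= lp_max u + lp_max v.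
Proof.
rewrite /lp_max opprD ge_max.
by rewrite !(le_trans (lp_posD _ _)) // lerD // le_max lexx ?orbT.
Qed.

Lemma lp_maxN w : lp_max (- w) = lp_max w.
Proof. by rewrite /lp_max opprK maxC. Qed.

Lemma lp_maxZ a w : lp_max (a *: w) = `|a| `^ p * lp_max w.
Proof.
have lp_maxZ_ge0 b : 0 <= b -> lp_max (b *: w) = b `^ p * lp_max w.
  by move=> b0; rewrite /lp_max -scalerN !lp_posZ // maxr_pMr ?powR_ge0.
have [a0|a_lt0] := leP 0 a; first by rewrite ger0_norm // lp_maxZ_ge0.
rewrite -[a]opprK scaleNr lp_maxN lp_maxZ_ge0 ?oppr_ge0 ?ltW //.
by rewrite opprK ltr0_norm.
Qed.

Lemma lp_normK w : lp_norm w `^ p = lp_max w.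
Proof. exact: (powRVp p_gt0 (lp_max_ge0 w)). Qed.

Lemma lp_norm_ge0 w : 0 <= lp_norm w.
Proof. exact: powR_ge0. Qed.

Lemma lp_normZ a w : lp_norm (a *: w) = `|a| * lp_norm w.
Proof.
by rewrite /lp_norm lp_maxZ (powRM _ (powR_ge0 _ _) (lp_max_ge0 w)) (powRpV p_gt0).
Qed.

Lemma lp_normD u v : lp_norm (u + v) `^ p <= lp_norm u `^ p + lp_norm v `^ p.
Proof. by have := lp_maxD u v; rewrite -!lp_normK. Qed.

Lemma lp_norm_coord w i : D i * `|w i| <= lp_norm w.
Proof.
apply: ler_powRV; rewrite ?mulr_ge0 ?lp_max_ge0 //.
have [w0|w_lt0] := leP 0 (w i).
  rewrite ger0_norm // -(max_l w0) (le_trans (lp_pos_term w i)) //.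
  by rewrite le_max lexx.
have -> : `|w i| = Num.max ((- w) i) 0 by rewrite ffunE ltr0_norm // max_l // oppr_ge0 (ltW w_lt0).
by rewrite (le_trans (lp_pos_term (- w) i)) // le_max lexx orbT.
Qed.

Lemma lp_norm_eq0 w : lp_norm w = 0 -> w = 0.
Proof.
move=> w0; apply/ffunP => i; rewrite ffunE; apply/eqP.
rewrite -normr_eq0 eq_le normr_ge0 andbT -(ler_pM2l (D_gt0 i)) mulr0 -w0.
exact: lp_norm_coord.
Qed.

Lemma lp_max_le w : lp_max w <= \sum_i (D i * `|w i|) `^ p.
Proof.
have lp_pos_le v : lp_pos v <= \sum_i (D i * `|v i|) `^ p.
  apply: ler_sum => i _; apply: ler_powR2r; rewrite ?(ltW p_gt0) ?mulr_ge0 // ler_wpM2l //.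
  by rewrite ge_max normr_ge0 ler_norm.
rewrite ge_max lp_pos_le (le_trans (lp_pos_le _)) //.
by apply: ler_sum => i _; rewrite ffunE normrN.
Qed.

Lemma lp_norm_complete (u : nat -> {ffun I -> R}) :
  (forall e, 0 < e -> exists N, forall n m, (N <= n)%N -> (N <= m)%N ->
     lp_norm (u n - u m) < e) ->
  exists l, forall e, 0 < e -> exists N, forall n, (N <= n)%N -> lp_norm (u n - l) < e.
Proof.
move=> u_cauchy.
have coord_cvg i : cvg ((fun n => u n i) @ \oo).
  apply: cauchy_seq_cvg => e e_gt0.
  have [N uN] := u_cauchy (D i * e) (mulr_gt0 (D_gt0 i) e_gt0).
  exists N => n m Nn Nm; rewrite -(ltr_pM2l (D_gt0 i)).
  by apply: le_lt_trans (uN n m Nn Nm); have := lp_norm_coord (u n - u m) i; rewrite !ffunE.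
pose l := [ffun i => lim ((fun n => u n i) @ \oo)].
exists l => e e_gt0.
pose K := (\sum_i D i `^ p) `^ p^-1.
have K1_gt0 : 0 < K + 1 by rewrite ltr_wpDl ?powR_ge0.
pose delta := e / (K + 1).
have delta_gt0 : 0 < delta by rewrite divr_gt0.
have : \forall n \near \oo, forall i, `|l i - u n i| < delta.
  apply: filter_forall => i; rewrite ffunE; exact: (cvgrPdist_lt _ _).1 (coord_cvg i) _ delta_gt0.
case=> N _ uN; exists N => n Nn.
have lp_max_le_delta : lp_max (u n - l) <= (delta * K) `^ p.
  rewrite powRM ?powR_ge0 ?(ltW delta_gt0) // powRVp ?sumr_ge0 // => [|i _]; last exact: powR_ge0.
  apply: le_trans (lp_max_le _) _; rewrite mulr_sumr; apply: ler_sum => i _.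
  rewrite -powRM ?(ltW delta_gt0) // mulrC ler_powR2r ?(ltW p_gt0) ?mulr_ge0 ?ler_wpM2r //.
  by have := uN n Nn i; rewrite !ffunE distrC => /ltW.
have deltaK_ge0 : 0 <= delta * K by rewrite mulr_ge0 ?powR_ge0 ?(ltW delta_gt0).
apply: (@le_lt_trans _ _ (delta * K)).
  rewrite -(powRpV p_gt0 deltaK_ge0).
  by apply: (ler_powRV p_gt0 (lp_norm_ge0 _) (powR_ge0 _ _)); rewrite lp_normK.
by rewrite /delta mulrAC ltr_pdivrMr // ltr_pM2l // ltrDl.
Qed.

Definition lp_space : @pBanach R p :=
  PBanach lp_norm_ge0 lp_norm_eq0 lp_normZ lp_normD lp_norm_complete.

End PosPartLp.

Section FpNorm.
Variables (R : realType) (p : R) (M : choiceType) (d : M -> M -> R) (o : M).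
Hypotheses (p_gt0 : 0 < p) (d_ge0 : forall x y, 0 <= d x y).
Implicit Types (s : seq (R * M)) (Y : @pBanach R p).

Definition lip1 Y (f : M -> pb_type Y) :=
  f o = 0 /\ forall x y, pb_norm Y (f x - f y) <= d x y.

Definition lp_bound s := (\sum_(c <- s) (`|c.1| * d c.2 o) `^ p) `^ p^-1.

Lemma pb_norm0 Y : pb_norm Y 0 = 0.
Proof. by have := @pb_normZ _ _ Y 0 0; rewrite scale0r normr0 mul0r. Qed.

Lemma lip1_sum_le Y (f : M -> pb_type Y) s :
  lip1 f -> pb_norm Y (\sum_(c <- s) c.1 *: f c.2) <= lp_bound s.
Proof.
case=> f0 f_lip; apply: (ler_powRV p_gt0); rewrite ?pb_norm_ge0 //.
  by apply: sumr_ge0 => c _; apply: powR_ge0.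
elim: s => [|c s IHs]; first by rewrite !big_nil pb_norm0 powR0 ?gt_eqF.
rewrite !big_cons; apply: le_trans (pb_normD _ _) _; apply: lerD => //.
rewrite pb_normZ !powRM ?pb_norm_ge0 // ler_wpM2l ?powR_ge0 //.
apply: ler_powR2r; rewrite ?pb_norm_ge0 ?(ltW p_gt0) //.
by have := f_lip c.2 o; rewrite f0 subr0.
Qed.

Lemma Fp_norm_le s U : 0 <= U ->
  (forall Y (f : M -> pb_type Y), lip1 f -> pb_norm Y (\sum_(c <- s) c.1 *: f c.2) <= U) ->
  Fp_norm p d o s <= U.
Proof.
move=> U0 fU; rewrite /Fp_norm; set S := [set r | _].
have [S_sup|S_nsup] := pselect (has_sup S); last by rewrite sup_out.
by apply: ge_sup S_sup.1 _ => _ [Y [f [f0 f_lip ->]]]; apply: fU.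
Qed.

Lemma Fp_norm_le_lp s : Fp_norm p d o s <= lp_bound s.
Proof. by apply: Fp_norm_le; [apply: powR_ge0 | move=> Y f; apply: lip1_sum_le]. Qed.

Lemma Fp_norm_ge s Y (f : M -> pb_type Y) :
  lip1 f -> pb_norm Y (\sum_(c <- s) c.1 *: f c.2) <= Fp_norm p d o s.
Proof.
case=> f0 f_lip; apply: sup_upper_bound; last by exists Y, f.
split; first by exists (pb_norm Y (\sum_(c <- s) c.1 *: f c.2)), Y, f.
by exists (lp_bound s) => _ [Z [g [g0 g_lip ->]]]; apply: lip1_sum_le.
Qed.

Lemma Fp_norm_ge0 s : 0 <= Fp_norm p d o s.
Proof.
rewrite /Fp_norm; set S := [set r | _].
have [S_sup|S_nsup] := pselect (has_sup S); last by rewrite sup_out.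
have [r Sr] := S_sup.1; apply: le_trans (sup_upper_bound S_sup Sr).
by case: Sr => Y [f [_ _ ->]]; apply: pb_norm_ge0.
Qed.

Lemma Fp_norm_eq s1 s2 :
  (forall (V : lmodType R) (f : M -> V),
     \sum_(c <- s1) c.1 *: f c.2 = \sum_(c <- s2) c.1 *: f c.2) ->
  Fp_norm p d o s1 = Fp_norm p d o s2.
Proof.
move=> s12; rewrite /Fp_norm; congr sup; apply/seteqP.
by split=> _ [Y [f [f0 f_lip ->]]]; exists Y, f; rewrite s12.
Qed.

End FpNorm.

Lemma sum_seq_sub (T : choiceType) (V : nmodType) (s : seq T) (F : T -> V) :
  uniq s -> \sum_(i : seq_sub s) F (val i) = \sum_(x <- s) F x.
Proof.
move=> s_uniq; rewrite -(big_map val xpredT); apply/perm_big/uniq_perm => //.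
  by rewrite (map_inj_uniq val_inj) index_enum_uniq.
move=> x; apply/mapP/idP => [[y _ ->]|xs]; first exact: ssvalP.
by exists (SeqSub xs); rewrite ?mem_index_enum.
Qed.

Section Isolated.
Variables (R : realType) (p : R) (M : choiceType) (d : M -> M -> R) (o : M).
Hypotheses (p_gt0 : 0 < p) (p_le1 : p <= 1) (d_pmetric : is_pmetric p d).
Hypothesis isolated : forall x z, x != o -> z != x -> d x o <= d x z.
Variable s : seq M.
Hypothesis s_uniq : uniq s.

Let d_ge0 x y : 0 <= d x y. Proof. by case: d_pmetric. Qed.

(* The origin gets no coordinate: the weights d(x, 0) are then positive and the
   origin is sent to 0. *)
Let I := seq_sub [seq x <- s | x != o].

Let val_neq0 (i : I) : val i != o.
Proof. by have := ssvalP i; rewrite mem_filter => /andP[]. Qed.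

Let val_in_s (i : I) : val i \in s.
Proof. by have := ssvalP i; rewrite mem_filter => /andP[]. Qed.

Let D (i : I) := d (val i) o.

Let D_gt0 i : 0 < D i.
Proof.
rewrite lt_neqAle d_ge0 andbT eq_sym; apply/eqP.
by case: d_pmetric => _ d_eq0 _ _ /d_eq0/eqP; apply/negP/val_neq0.
Qed.

Let Y := lp_space p_gt0 p_le1 D_gt0.

Let embed (z : M) : {ffun I -> R} := [ffun i => (val i == z)%:R].

Let lp_pos_embedB x y : lp_pos p D (embed x - embed y) <= d x y `^ p.
Proof.
have [<-|xy] := eqVneq x y.
  rewrite subrr /lp_pos big1 ?powR_ge0 // => i _.
  by rewrite ffunE maxxx mulr0 powR0 ?gt_eqF.
apply: (@le_trans _ _ (\sum_i (if val i == x then d x y `^ p else 0))).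
  apply: ler_sum => i _; rewrite !ffunE; have [ix|_] := eqVneq (val i) x.
    rewrite ix (negbTE xy) subr0 max_l ?ler01 // mulr1.
    apply: ler_powR2r; rewrite ?(ltW p_gt0) ?d_ge0 // /D ix.
    by apply: isolated; [rewrite -ix; apply: val_neq0 | rewrite eq_sym].
  rewrite max_r ?mulr0 ?powR0 ?gt_eqF // sub0r oppr_le0.
  by case: (_ == _); rewrite ?ler01.
case: (pickP (fun i : I => val i == x)) => [i0 /eqP i0x|no_x]; last first.
  by rewrite big1 ?powR_ge0 // => i _; rewrite no_x.
rewrite (bigD1 i0) ?i0x ?eqxx //= big1 ?addr0 // => j ji0.
by rewrite -i0x (inj_eq val_inj) (negbTE ji0).
Qed.

Let embed_lip1 : lip1 d o (embed : M -> pb_type Y).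
Proof.
split.
  by apply/ffunP => i; rewrite !ffunE (negbTE (val_neq0 i)).
move=> x y; rewrite -(powRpV p_gt0 (d_ge0 x y)).
apply: ler_powR2r; [by rewrite invr_ge0 ltW | exact: lp_max_ge0 |].
case: d_pmetric => _ _ d_sym _.
by rewrite ge_max lp_pos_embedB opprB d_sym lp_pos_embedB.
Qed.

Let embed_sum (a : M -> R) i : (\sum_(x <- s) a x *: embed x) i = a (val i).
Proof.
have scaleE (b c : R) : b *: c = b * c by [].
rewrite sum_ffunE (bigD1_seq (val i)) ?val_in_s //= /embed !ffunE eqxx scaleE mulr1.
by rewrite big1 ?addr0 // => z zi; rewrite !ffunE eq_sym (negbTE zi) scaleE mulr0.
Qed.

Lemma Fp_normp_isolated (a : M -> R) : (forall x, 0 <= a x) ->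
  Fp_norm p d o [seq (a x, x) | x <- s] `^ p = \sum_(x <- s) (a x * d x o) `^ p.
Proof.
move=> a_ge0; have sum_ge0 : 0 <= \sum_(x <- s) (a x * d x o) `^ p.
  by apply: sumr_ge0 => x _; apply: powR_ge0.
rewrite -[RHS](powRVp p_gt0 sum_ge0); congr (_ `^ _); apply/le_anti/andP; split.
  apply: le_trans (Fp_norm_le_lp o p_gt0 d_ge0 _) _; rewrite /lp_bound big_map.
  by under eq_bigr do rewrite /= ger0_norm //.
have := Fp_norm_ge p_gt0 d_ge0 [seq (a x, x) | x <- s] embed_lip1; apply: le_trans.
rewrite big_map.
change ((\sum_(x <- s) (a x * d x o) `^ p) `^ p^-1
  <= lp_norm p D (\sum_(x <- s) a x *: embed x)).
apply: ler_powR2r; rewrite ?invr_ge0 ?(ltW p_gt0) //.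
rewrite /lp_max le_max; apply/orP; left; rewrite /lp_pos.
rewrite [leRHS](eq_bigr (fun i => (a (val i) * d (val i) o) `^ p)) => [|i _]; last first.
  by rewrite embed_sum max_l // mulrC.
rewrite (sum_seq_sub (fun x => (a x * d x o) `^ p)) ?filter_uniq // big_filter.
rewrite [leRHS]big_mkcond; apply: ler_sum => x _.
have [->|//] := eqVneq x o.
by case: d_pmetric => _ d_eq0 _ _; rewrite (d_eq0 o o).2 // mulr0 powR0 ?gt_eqF.
Qed.

End Isolated.

Lemma finset_net_cvg_const (T : Type) (R : realType) (g : set T -> R) (A : set T) v l :
  finite_set A -> (forall B, finite_set B -> A `<=` B -> g B = v) ->
  finset_net_cvg g l -> v = l.
Proof.
move=> A_fin gA g_cvg; apply/eqP/negPn/negP => vl.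
have vl_gt0 : 0 < `|v - l| by rewrite normr_gt0 subr_eq0.
have [B [B_fin gB]] := g_cvg _ vl_gt0.
have AB_fin : finite_set (A `|` B) by rewrite finite_setU.
by have := gB _ AB_fin (@subsetUr _ _ _); rewrite gA // ?ltxx //; apply: subsetUl.
Qed.

Lemma esum_finset_net_cvg (T : choiceType) (R : realType) (r : T -> R) :
  (forall x, 0 <= r x) -> (\esum_(x in [set: T]) (r x)%:E < +oo)%E ->
  finset_net_cvg (fun B => \sum_(x <- fset_set B) r x)
    (fine (\esum_(x in [set: T]) (r x)%:E)).
Proof.
move=> r_ge0 r_fin; set E := \esum_(x in _) _ in r_fin *.
have E_ge0 : (0 <= E)%E by apply: esum_ge0 => x _; rewrite lee_fin.
have EE : E = (fine E)%:E by rewrite fineK // ge0_fin_numE.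
have sumE B : finite_set B ->
    (\sum_(x \in B) (r x)%:E)%E = (\sum_(x <- fset_set B) r x)%:E.
  by move=> B_fin; rewrite fsbig_finite // sumEFin.
have sum_le B : finite_set B -> \sum_(x <- fset_set B) r x <= fine E.
  by move=> B_fin; rewrite -lee_fin -EE -sumE //; apply: ereal_sup_ubound; exists B.
move=> e e_gt0; have : ((fine E - e)%:E < E)%E by rewrite {2}EE lte_fin gtrBl.
rewrite {1}/E /esum => /ereal_sup_gt[_ [A [A_fin _] <-]].
rewrite sumE // lte_fin => A_large; exists A; split=> // B B_fin AB.
have sumAB : \sum_(x <- fset_set A) r x <= \sum_(x <- fset_set B) r x.
  rewrite -lee_fin -!sumE //; apply: lee_fsum_nneg_subset => //; first exact/subsetP.
  by move=> x _; rewrite lee_fin.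
have := sum_le B B_fin; rewrite ltr_norml; lra.
Qed.

Lemma sum_pred1_seq (I : eqType) (V : nmodType) (r : seq I) x (v : V) :
  uniq r -> x \in r -> \sum_(z <- r) (if z == x then v else 0) = v.
Proof.
move=> r_uniq xr; rewrite (bigD1_seq x) //= eqxx big1 ?addr0 //.
by move=> z /negbTE ->.
Qed.

Lemma esum_pred1 (T : choiceType) (R : realType) (x : T) (c : R) : 0 <= c ->
  \esum_(z in [set: T]) (if z == x then c else 0)%:E = c%:E.
Proof.
move=> c_ge0; rewrite (@eq_esum _ _ _ _ (fun z => if z \in [set x] then c%:E else 0%E)).
  by rewrite -esum_mkcond esum_set1 // lee_fin.
by move=> z _; rewrite in_set1; case: eqP.
Qed.

Section Equivalence.
Variables (R : realType) (p : R) (M : choiceType) (d : M -> M -> R) (o : M).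
Hypotheses (p_gt0 : 0 < p) (p_lt1 : p < 1) (d_pmetric : is_pmetric p d).

Let p_le1 : p <= 1. Proof. exact: ltW. Qed.
Let d_ge0 x y : 0 <= d x y. Proof. by case: d_pmetric. Qed.

Definition Fp_sum_isometry := forall a : M -> R, (forall x, 0 <= a x) ->
  (\esum_(x in [set: M]) ((a x * d x o) `^ p)%:E < +oo)%E ->
  finset_net_cvg (fun B => Fp_norm p d o [seq (a x, x) | x <- fset_set B] `^ p)
    (fine (\esum_(x in [set: M]) ((a x * d x o) `^ p)%:E)).

Definition Fp_pair_isometry := forall (alpha : R) (x y : M),
  0 <= alpha -> x != o -> y != o -> x != y ->
  Fp_norm p d o [:: (1, x); (alpha, y)] `^ p = d x o `^ p + alpha `^ p * d y o `^ p.

Definition origin_nearest := forall x, x != o -> d x o = dist_set d x (~` [set x]).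

Lemma origin_nearestP :
  origin_nearest <-> forall x z, x != o -> z != x -> d x o <= d x z.
Proof.
have d_bounded x : has_lbound [set d x z | z in ~` [set x]].
  by exists 0 => _ [z _ <-].
split=> [nearest x z xo zx|isolated x xo].
  rewrite nearest // /dist_set; apply: ge_inf => //.
  by exists z => //; apply/eqP.
have o_in : [set d x z | z in ~` [set x]] (d x o) by exists o => //; apply/eqP; rewrite eq_sym.
apply/le_anti; rewrite ge_inf //= andbT /dist_set.
by apply: lb_le_inf; [exists (d x o) | move=> _ [z /eqP zx <-]; apply: isolated].
Qed.

Lemma Fp_norm_pair_le x z alpha : 0 <= alpha ->
  Fp_norm p d o [:: (1, x); (alpha, z)] `^ p <= (1 + alpha) `^ p * d z o `^ p + d x z `^ p.
Proof.
move=> alpha_ge0; set U := _ + _.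
have U_ge0 : 0 <= U by rewrite addr_ge0 ?mulr_ge0 ?powR_ge0.
rewrite -(powRVp p_gt0 U_ge0) ler_powR2r ?(ltW p_gt0) ?Fp_norm_ge0 //.
apply: Fp_norm_le; rewrite ?powR_ge0 // => Y f [f0 f_lip].
apply: (ler_powRV p_gt0); rewrite ?pb_norm_ge0 // !big_cons big_nil /= scale1r addr0.
have -> : f x + alpha *: f z = (1 + alpha) *: f z + (f x - f z).
  by rewrite scalerDl scale1r addrAC addrCA subrr addr0.
apply: le_trans (pb_normD _ _) _; apply: lerD; last first.
  by apply: ler_powR2r; rewrite ?pb_norm_ge0 ?(ltW p_gt0).
rewrite pb_normZ ger0_norm ?addr_ge0 // powRM ?addr_ge0 ?pb_norm_ge0 //.
rewrite ler_wpM2l ?powR_ge0 // ler_powR2r ?pb_norm_ge0 ?(ltW p_gt0) //.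
by have := f_lip z o; rewrite f0 subr0.
Qed.

Lemma pair_isometry_origin_nearest : Fp_pair_isometry -> origin_nearest.
Proof.
move=> pair_iso; apply/origin_nearestP => x z xo zx.
have [->|zo] := eqVneq z o; first exact: lexx.
rewrite leNgt; apply/negP => dxz_lt.
pose gap := d x o `^ p - d x z `^ p.
have gap_gt0 : 0 < gap by rewrite subr_gt0; apply: gt0_ltr_powR; rewrite ?nnegrE.
pose Dz := d z o `^ p.
have Dz_gt0 : 0 < Dz.
  apply: powR_gt0; rewrite lt_neqAle d_ge0 andbT eq_sym.
  by case: d_pmetric => _ d_eq0 _ _; apply/eqP => /d_eq0/eqP; apply/negP.
(* alpha ^ (p - 1) * Dz bounds ((1 + alpha) ^ p - alpha ^ p) * Dz and is made
   half the gap. *)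
pose t := gap / (Dz *+ 2).
have t_gt0 : 0 < t by rewrite divr_gt0 // mulrn_wgt0.
pose alpha := t `^ (p - 1)^-1.
have alpha_gt0 : 0 < alpha := powR_gt0 _ t_gt0.
have alphaE : alpha `^ (p - 1) = t.
  by rewrite -powRrM mulVf ?powRr1 ?(ltW t_gt0) // subr_eq0 lt_eqF.
have := Fp_norm_pair_le x z (ltW alpha_gt0).
rewrite (pair_iso _ _ _ (ltW alpha_gt0) xo zo) 1?eq_sym // -/Dz => pair_le.
have : gap <= ((1 + alpha) `^ p - alpha `^ p) * Dz by rewrite /gap mulrBl; lra.
rewrite leNgt => /negP; apply.
apply: le_lt_trans (ler_wpM2r (ltW Dz_gt0) (powR1D_sub_le p_le1 alpha_gt0)) _.
by rewrite alphaE /t mulrAC ltr_pdivrMr ?mulrn_wgt0 // ltr_pM2l // mulr2n ltrDl.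
Qed.

Lemma sum_isometry_pair : Fp_sum_isometry -> Fp_pair_isometry.
Proof.
move=> sum_iso alpha x y alpha_ge0 xo yo xy.
pose a z := if z == x then 1 else if z == y then alpha else 0.
have a_ge0 z : 0 <= a z by rewrite /a; do 2?case: ifP => _ //; rewrite ler01.
have termE z : ((a z * d z o) `^ p)%:E = ((if z == x then d x o `^ p else 0)%:E
    + (if z == y then alpha `^ p * d y o `^ p else 0)%:E)%E.
  rewrite /a; have [->|zx] := eqVneq z x; first by rewrite (negbTE xy) mul1r addr0.
  have [->|zy] := eqVneq z y; first by rewrite add0r powRM.
  by rewrite mul0r powR0 ?gt_eqF // add0r.
have esumE : \esum_(z in [set: M]) ((a z * d z o) `^ p)%:E
    = (d x o `^ p + alpha `^ p * d y o `^ p)%:E.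
  rewrite (eq_esum (fun z _ => termE z)) esumD => [|z _|z _]; last 2 first.
  - by case: ifP; rewrite lee_fin ?powR_ge0.
  - by case: ifP; rewrite lee_fin ?mulr_ge0 ?powR_ge0.
  by rewrite !esum_pred1 ?mulr_ge0 ?powR_ge0.
have := sum_iso a a_ge0; rewrite esumE ltry => /(_ isT) /=.
apply: (finset_net_cvg_const (A := [set x] `|` [set y])).
  by rewrite finite_setU; split; apply: finite_set1.
move=> B B_fin xyB; congr (_ `^ _); apply: Fp_norm_eq => V f.
have inB z : ([set x] `|` [set y]) z -> z \in fset_set B.
  by move/xyB; rewrite in_fset_set // inE.
rewrite big_map !big_cons big_nil /= scale1r addr0.
rewrite (eq_bigr (fun z => (if z == x then f x else 0) + (if z == y then alpha *: f y else 0))).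
  by rewrite big_split /= !sum_pred1_seq ?fset_uniq ?inB //; [right | left].
move=> z _; rewrite /a; have [->|zx] := eqVneq z x.
  by rewrite (negbTE xy) scale1r addr0.
by have [->|zy] := eqVneq z y; rewrite ?add0r ?scale0r ?addr0.
Qed.

Lemma origin_nearest_sum_isometry : origin_nearest -> Fp_sum_isometry.
Proof.
move=> /origin_nearestP isolated a a_ge0 sum_fin.
have := esum_finset_net_cvg (fun x => powR_ge0 (a x * d x o) p) sum_fin.
move=> net e e_gt0; have [A [A_fin netA]] := net e e_gt0.
exists A; split=> // B B_fin AB.
by rewrite (Fp_normp_isolated p_gt0 p_le1 d_pmetric isolated) ?fset_uniq //; apply: netA.
Qed.

End Equivalence.

Unset Implicit Arguments. Set Strict Implicit.

Theorem theorem2p8 (R : realType) (p : R) (M : choiceType) (d : M -> M -> R) (o : M) :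
  0 < p < 1 -> is_pmetric p d ->
  (exists x y z : M, [/\ x != y, y != z & x != z]) ->
  [<->
    (* (a) *)
    (forall a : M -> R, (forall x, 0 <= a x) ->
       (\esum_(x in [set: M]) ((a x * d x o) `^ p)%:E < +oo)%E ->
       finset_net_cvg
         (fun B : set M => Fp_norm p d o [seq (a x, x) | x <- fset_set B] `^ p)
         (fine (\esum_(x in [set: M]) ((a x * d x o) `^ p)%:E)));
    (* (b) *)
    (forall (alpha : R) (x y : M), 0 <= alpha -> x != o -> y != o -> x != y ->
       Fp_norm p d o [:: (1, x); (alpha, y)] `^ p
         = d x o `^ p + alpha `^ p * d y o `^ p);
    (* (c) *)
    (forall x : M, x != o -> d x o = dist_set d x (~` [set x]))].
Proof.
move=> /andP[p_gt0 p_lt1] d_pmetric _.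
tfae.
- exact: (sum_isometry_pair p_gt0).
- exact: (pair_isometry_origin_nearest p_gt0 p_lt1 d_pmetric).
- exact: (origin_nearest_sum_isometry p_gt0 p_lt1 d_pmetric).
Qed.
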